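(* Let $\delta=\ln 3$, let $X\subset\mathbb{H}^n$ be finite with $|X|\le 2^c+2$ for some $c>0$, and let $(T,p)$ be a Gromov approximating tree for $X$. Let $x_1,x_2,x_3\in X$, $\Delta=[x_1x_2x_3]\subset\mathbb{H}^n$ the geodesic triangle, $T_\Delta\subset T$ the tripod spanned by $p(x_1),p(x_2),p(x_3)$ with branch point $o$, and $o_{ij}\in[x_ix_j]$ the internal points of $\Delta$, i.e. the points with $d(x_i,o_{ij})=\frac12\big(d(x_i,x_j)+d(x_i,x_l)-d(x_j,x_l)\big)$ where $\{i,j,l\}=\{1,2,3\}$. Let $p_\Delta:\Delta\to T_\Delta$ be the map that sends $x_i\mapsto p(x_i)$, $o_{ij}\mapsto o$, and maps each segment $[x_io_{ij}]$ onto $[p(x_i)o]$ by the dilation $d_T(p(x_i),p_\Delta(z))=\frac{d_T(p(x_i),o)}{d(x_i,o_{ij})}\,d(x_i,z)$. Then $p_\Delta$ is a $(1,4c\delta+2\delta)$-quasi-isometry, where $\Delta$ carries the metric restricted from $\mathbb{H}^n$.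
   Context: A Gromov approximating tree for a finite $X\subset\mathbb{H}^n$ with $|X|\le 2^c+2$ is a pair $(T,p)$ where $T$ is a finite metric tree and $p:X\to T$ maps $X$ to vertices of $T$ such that every leaf (valence-one vertex) of $T$ lies in $p(X)$, and $d(x_1,x_2)-2c\delta\le d_T(p(x_1),p(x_2))\le d(x_1,x_2)$ for all $x_1,x_2\in X$, with $\delta=\ln 3$. Maps $f:X\to Y$ is an $(L,A)$-quasi-isometry if $-A+\frac1L d_X(a,b)\le d_Y(f(a),f(b))\le Ld_X(a,b)+A$ for all $a,b$, and there is $\bar f:Y\to X$ satisfying the analogous inequalities with $d_X(a,\bar f f(a))\le A$ and $d_Y(y,f\bar f(y))\le A$ for all $a\in X,y\in Y$. *)

From Stdlib Require Import Reals List.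
Open Scope R_scope.

Fixpoint sum1 (k : nat) (f : nat -> R) : R :=
  match k with
  | O => 0
  | S m => sum1 m f + f (S m)
  end.

Definition mink (n : nat) (x y : nat -> R) : R :=
  - (x 0%nat * y 0%nat) + sum1 n (fun i => x i * y i).

Definition Hpt (n : nat) : Type :=
  { x : nat -> R | mink n x x = -1 /\ 0 < x 0%nat /\ (forall i, (n < i)%nat -> x i = 0) }.

Definition arcosh (t : R) : R := ln (t + sqrt (t * t - 1)).

Definition dH (n : nat) (x y : Hpt n) : R :=
  arcosh (- mink n (proj1_sig x) (proj1_sig y)).

Definition delta : R := ln 3.

(* z lies on the geodesic segment [a,b] (in a uniquely geodesic space) *)
Definition between {U : Type} (d : U -> U -> R) (a z b : U) : Prop :=
  d a z + d z b = d a b.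

Definition is_metric {U : Type} (d : U -> U -> R) : Prop :=
  (forall x y, 0 <= d x y) /\
  (forall x y, d x y = 0 <-> x = y) /\
  (forall x y, d x y = d y x) /\
  (forall x y z, d x z <= d x y + d y z).

Definition is_geodesic {U : Type} (d : U -> U -> R) : Prop :=
  forall a b, exists g : R -> U, g 0 = a /\ g (d a b) = b /\
    forall s t, 0 <= s <= d a b -> 0 <= t <= d a b -> d (g s) (g t) = Rabs (s - t).

Definition zero_hyperbolic {U : Type} (d : U -> U -> R) : Prop :=
  forall x y z w, d x y + d z w <= Rmax (d x z + d y w) (d x w + d y z).

(* A finite metric tree with vertex set V: a geodesic 0-hyperbolic metric
   space (an R-tree) which is the union of the finitely many segments
   between points of V. *)
Definition finite_metric_tree {T : Type} (d : T -> T -> R) (V : list T) : Prop :=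
  is_metric d /\ is_geodesic d /\ zero_hyperbolic d /\
  (forall z, exists a b, In a V /\ In b V /\ between d a z b).

Definition is_leaf {T : Type} (d : T -> T -> R) (v : T) : Prop :=
  forall a b, between d a v b -> v = a \/ v = b.

Definition gromov_approx_tree {U T : Type} (c : R) (dX : U -> U -> R) (X : list U)
    (dT : T -> T -> R) (V : list T) (p : U -> T) : Prop :=
  finite_metric_tree dT V /\
  (forall x, In x X -> In (p x) V) /\
  (forall v, In v V -> is_leaf dT v -> exists x, In x X /\ p x = v) /\
  (forall x1 x2, In x1 X -> In x2 X ->
      dX x1 x2 - 2 * c * delta <= dT (p x1) (p x2) <= dX x1 x2).

Definition quasi_isometry {U V : Type} (dU : U -> U -> R) (A : U -> Prop)
    (dV : V -> V -> R) (B : V -> Prop) (f : U -> V) (L K : R) : Prop :=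
  (forall a, A a -> B (f a)) /\
  (forall a b, A a -> A b ->
      - K + (1 / L) * dU a b <= dV (f a) (f b) <= L * dU a b + K) /\
  exists g : V -> U,
    (forall y, B y -> A (g y)) /\
    (forall y z, B y -> B z ->
      - K + (1 / L) * dV y z <= dU (g y) (g z) <= L * dV y z + K) /\
    (forall a, A a -> dU a (g (f a)) <= K) /\
    (forall y, B y -> dV y (f (g y)) <= K).

Definition dilation_on {U T : Type} (dX : U -> U -> R) (dT : T -> T -> R)
    (pD : U -> T) (xi oij : U) (pxi o : T) : Prop :=
  forall z, between dX xi z oij ->
    between dT pxi (pD z) o /\
    dT pxi (pD z) = dT pxi o / dX xi oij * dX xi z.

From Stdlib Require Import Reals List Lra Lia ClassicalEpsilon.
Open Scope R_scope.

(* A point of the triangle Delta at distance g_a - h from x_a on a side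
   through x_a (g_a = (x_b|x_c)_{x_a} = d(x_a, o_ab), 0 <= h <= g_a) sits at
   height h on the leg of x_a; a point y of [p(x_a) o] sits at height
   d_T(y, o) on the tree leg of p(x_a).  Points correspond when they lie on
   legs of the same vertex with heights differing by at most E = 2c delta.
   1. In the hyperboloid model d_H is a metric, points of a segment are
      located by their distance to an endpoint (hyperbolic Stewart theorem),
      every such distance is realised, and triangles have insize <= ln 3.
   2. In any space with these properties and insize <= kappa, points at
      heights h, h' are |h - h'| (same leg) or h + h' (different legs) apart
      up to 2 kappa; in a 0-hyperbolic tree these distances are exact.
   3. Hence corresponding pairs distort distances by <= 2E + 2 kappa; p_Delta
      maps into the correspondence, which reaches every tripod point, so it
      is a (1, 2E + 2 kappa)-quasi-isometry.  The Gromov tree inequalities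
      give the leg lengths up to E, and 2E + 2 ln 3 = 4c delta + 2 delta. *)

Lemma sum1_ext k f g :
  (forall i, (1 <= i <= k)%nat -> f i = g i) -> sum1 k f = sum1 k g.
Proof.
  induction k as [|k IH]; intros Hfg; simpl; [reflexivity|].
  rewrite (Hfg (S k)) by lia. rewrite IH; [reflexivity|intros; apply Hfg; lia].
Qed.

Lemma sum1_linear k a b f g :
  sum1 k (fun i => a * f i + b * g i) = a * sum1 k f + b * sum1 k g.
Proof. induction k as [|k IH]; simpl; [ring|rewrite IH; ring]. Qed.

Lemma sum1_nonneg k f : (forall i, 0 <= f i) -> 0 <= sum1 k f.
Proof. intros Hf; induction k; simpl; [lra|specialize (Hf (S k)); lra]. Qed.

Lemma sum1_squares_nonneg k f : 0 <= sum1 k (fun i => f i * f i).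
Proof. apply sum1_nonneg; intros; nra. Qed.

Lemma sum1_squares_zero k f :
  sum1 k (fun i => f i * f i) = 0 -> forall i, (1 <= i <= k)%nat -> f i = 0.
Proof.
  induction k as [|k IH]; intros Hsum i Hi; [lia|]. simpl in Hsum.
  pose proof (sum1_squares_nonneg k f).
  assert (Hlast : f (S k) = 0) by nra.
  destruct (Nat.eq_dec i (S k)) as [->|Hne]; [exact Hlast|].
  apply IH; [nra|lia].
Qed.

Lemma sum1_cauchy_schwarz k f g :
  (sum1 k (fun i => f i * g i))^2
  <= sum1 k (fun i => f i * f i) * sum1 k (fun i => g i * g i).
Proof.
  induction k as [|k IH]; simpl; [lra|].
  set (A := sum1 k (fun i => f i * g i)) in *.
  set (P := sum1 k (fun i => f i * f i)) in *.
  set (Q := sum1 k (fun i => g i * g i)) in *.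
  assert (HP : 0 <= P) by apply sum1_squares_nonneg.
  assert (HQ : 0 <= Q) by apply sum1_squares_nonneg.
  set (a := f (S k)); set (b := g (S k)).
  assert (HA : Rabs A <= sqrt P * sqrt Q).
  { rewrite <- sqrt_mult, <- sqrt_Rsqr_abs by lra.
    apply sqrt_le_1_alt. unfold Rsqr. lra. }
  assert (Hcross : A * a * b <= sqrt P * sqrt Q * (Rabs a * Rabs b)).
  { rewrite <- Rabs_mult, Rmult_assoc.
    apply Rle_trans with (Rabs A * Rabs (a * b)).
    - rewrite <- Rabs_mult. apply Rle_abs.
    - apply Rmult_le_compat_r; [apply Rabs_pos|exact HA]. }
  assert (sqrt P * sqrt P = P) by (apply sqrt_sqrt; lra).
  assert (sqrt Q * sqrt Q = Q) by (apply sqrt_sqrt; lra).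
  assert (0 <= (sqrt P * Rabs b - sqrt Q * Rabs a)^2) by apply pow2_ge_0.
  assert (Rabs a * Rabs a = a * a) by (rewrite <- Rabs_mult; apply Rabs_right; nra).
  assert (Rabs b * Rabs b = b * b) by (rewrite <- Rabs_mult; apply Rabs_right; nra).
  nra.
Qed.

Definition pt {n} (x : Hpt n) : nat -> R := proj1_sig x.

Lemma mink_sym n u v : mink n u v = mink n v u.
Proof. unfold mink. f_equal; [ring|]. apply sum1_ext; intros; ring. Qed.

Lemma mink_linear n a b u v w :
  mink n (fun i => a * u i + b * v i) w = a * mink n u w + b * mink n v w.
Proof.
  unfold mink.
  rewrite (sum1_ext n _ (fun i => a * (u i * w i) + b * (v i * w i))) by (intros; ring).
  rewrite sum1_linear. ring.
Qed.

Lemma mink_ext n u u' w :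
  (forall i, (i <= n)%nat -> u i = u' i) -> mink n u w = mink n u' w.
Proof.
  intros Hu. unfold mink. rewrite (Hu 0%nat) by lia. f_equal.
  apply sum1_ext. intros i Hi. rewrite Hu by lia. reflexivity.
Qed.

Lemma mink_linear3 n a b c u v w z :
  mink n (fun i => a * u i + b * v i + c * w i) z
  = a * mink n u z + b * mink n v z + c * mink n w z.
Proof.
  rewrite (mink_ext n _ (fun i => 1 * (fun j => a * u j + b * v j) i + c * w i))
    by (intros; ring).
  rewrite (mink_linear n 1 c), mink_linear. ring.
Qed.

Lemma pt_norm n (x : Hpt n) : mink n (pt x) (pt x) = -1.
Proof. destruct x as [v [H1 [H2 H3]]]; exact H1. Qed.

Lemma pt_pos n (x : Hpt n) : 0 < pt x 0%nat.
Proof. destruct x as [v [H1 [H2 H3]]]; exact H2. Qed.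

Lemma pt_vanish n (x : Hpt n) i : (n < i)%nat -> pt x i = 0.
Proof. destruct x as [v [H1 [H2 H3]]]; apply H3. Qed.

Lemma orthogonal_spacelike n (x : Hpt n) v : mink n v (pt x) = 0 ->
  0 <= mink n v v /\ (mink n v v = 0 -> forall i, (i <= n)%nat -> v i = 0).
Proof.
  intros Hvx. pose proof (pt_norm n x) as Hx. pose proof (pt_pos n x) as Hx0.
  unfold mink in *. set (y := pt x) in *.
  pose proof (sum1_cauchy_schwarz n v y) as CS.
  set (A := sum1 n (fun i => v i * v i)) in *.
  set (B := sum1 n (fun i => y i * y i)) in *.
  set (C := sum1 n (fun i => v i * y i)) in *.
  assert (0 <= A) by apply sum1_squares_nonneg.
  assert (HC : C = v 0%nat * y 0%nat) by lra.
  assert (HB : B = y 0%nat * y 0%nat - 1) by lra.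
  rewrite HC, HB in CS.
  assert (0 < y 0%nat * y 0%nat) by nra.
  assert (HA : v 0%nat * v 0%nat <= A) by nra.
  split; [lra|]. intros Hnull.
  assert (Hv0 : v 0%nat = 0) by nra.
  intros [|i] Hi; [exact Hv0|].
  apply (sum1_squares_zero n v); [fold A; nra|lia].
Qed.

Lemma null_orthogonal_zero n (x : Hpt n) w :
  mink n w (pt x) = 0 -> mink n w w = 0 -> forall z, mink n w z = 0.
Proof.
  intros Hwx Hnull z. destruct (orthogonal_spacelike n x w Hwx) as [_ Hzero].
  rewrite (mink_ext n w (fun i => 0 * z i + 0 * z i))
    by (intros i Hi; rewrite (Hzero Hnull i Hi); ring).
  rewrite mink_linear. ring.
Qed.

Lemma orthogonal_cauchy_schwarz n (y : Hpt n) u w :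
  mink n u (pt y) = 0 -> mink n w (pt y) = 0 ->
  (mink n u w)^2 <= mink n u u * mink n w w.
Proof.
  intros Hu Hw.
  assert (Hquad : forall l, 0 <= mink n u u + 2 * l * mink n u w + l * l * mink n w w).
  { intros l.
    assert (Hv : mink n (fun i => 1 * u i + l * w i) (pt y) = 0)
      by (rewrite mink_linear, Hu, Hw; ring).
    destruct (orthogonal_spacelike n y _ Hv) as [Hpos _].
    rewrite mink_linear, (mink_sym n u), (mink_sym n w), !mink_linear,
      (mink_sym n w u) in Hpos. nra. }
  destruct (orthogonal_spacelike n y w Hw) as [Hww _].
  destruct (Req_dec (mink n w w) 0) as [Hnull|Hnull].
  - rewrite (mink_sym n u w), (null_orthogonal_zero n y w Hw Hnull), Hnull. nra.
  - specialize (Hquad (- mink n u w / mink n w w)).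
    replace (mink n u u + 2 * (- mink n u w / mink n w w) * mink n u w
             + (- mink n u w / mink n w w) * (- mink n u w / mink n w w) * mink n w w)
      with ((mink n u u * mink n w w - (mink n u w)^2) / mink n w w) in Hquad
      by (field; lra).
    apply Rmult_le_compat_r with (r := mink n w w) in Hquad; [|lra].
    unfold Rdiv in Hquad. rewrite Rmult_0_l, Rmult_assoc, Rinv_l, Rmult_1_r in Hquad by lra.
    lra.
Qed.

Lemma mink_le_minus1 n (x y : Hpt n) : 1 <= - mink n (pt x) (pt y).
Proof.
  set (m := mink n (pt x) (pt y)).
  assert (Hv : mink n (fun i => 1 * pt x i + m * pt y i) (pt y) = 0)
    by (rewrite mink_linear, pt_norm; unfold m; ring).
  destruct (orthogonal_spacelike n y _ Hv) as [Hsq _].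
  rewrite mink_linear, (mink_sym n (pt x)), (mink_sym n (pt y)), !mink_linear, !pt_norm,
    (mink_sym n (pt y) (pt x)) in Hsq. fold m in Hsq.
  assert (Hneg : 0 < - m).
  { pose proof (pt_norm n x) as Nx; pose proof (pt_norm n y) as Ny.
    pose proof (pt_pos n x); pose proof (pt_pos n y).
    pose proof (sum1_cauchy_schwarz n (pt x) (pt y)) as CS. unfold m, mink in *.
    set (xs := pt x) in *; set (ys := pt y) in *.
    pose proof (sum1_squares_nonneg n xs). pose proof (sum1_squares_nonneg n ys).
    set (Sx := sum1 n (fun i => xs i * xs i)) in *.
    set (Sy := sum1 n (fun i => ys i * ys i)) in *.
    set (Sxy := sum1 n (fun i => xs i * ys i)) in *.
    assert (Sxy^2 < (xs 0%nat * ys 0%nat)^2) by nra.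
    assert (0 < xs 0%nat * ys 0%nat) by nra.
    nra. }
  nra.
Qed.

Ltac exp_identity :=
  unfold cosh, sinh, Rminus;
  repeat rewrite ?exp_Ropp, ?exp_plus, ?Ropp_involutive;
  field; repeat split; apply Rgt_not_eq, exp_pos.

Lemma cosh_sq_sinh_sq t : (cosh t)^2 - (sinh t)^2 = 1.
Proof. exp_identity. Qed.

Lemma cosh_plus s t : cosh (s + t) = cosh s * cosh t + sinh s * sinh t.
Proof. exp_identity. Qed.

Lemma sinh_nonneg t : 0 <= t -> 0 <= sinh t.
Proof.
  intros Ht. rewrite <- sinh_0.
  destruct (Req_dec t 0) as [->|Hne]; [lra|left; apply sinh_lt; lra].
Qed.

Lemma sinh_pos t : 0 < t -> 0 < sinh t.
Proof. intros Ht. rewrite <- sinh_0. apply sinh_lt, Ht. Qed.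

Lemma cosh_abs t : cosh (Rabs t) = cosh t.
Proof.
  unfold Rabs. destruct (Rcase_abs t); [|reflexivity].
  unfold cosh. rewrite Ropp_involutive. lra.
Qed.

Lemma cosh_lt s t : 0 <= s -> s < t -> cosh s < cosh t.
Proof.
  intros Hs Hst.
  assert (Hdiff : cosh t - cosh s = (exp t - exp s) * (1 - exp (-s) * exp (-t)) / 2)
    by exp_identity.
  assert (exp s < exp t) by (apply exp_increasing; lra).
  assert (exp (-s) * exp (-t) < 1).
  { rewrite <- exp_plus, <- exp_0. apply exp_increasing. lra. }
  assert (0 < (exp t - exp s) * (1 - exp (-s) * exp (-t))) by (apply Rmult_lt_0_compat; lra).
  lra.
Qed.

Lemma cosh_le s t : 0 <= s -> s <= t -> cosh s <= cosh t.
Proof. intros Hs Hst. destruct (Req_dec s t) as [->|Hne]; [lra|left; apply cosh_lt; lra]. Qed.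

Lemma cosh_le_inv s t : 0 <= s -> 0 <= t -> cosh s <= cosh t -> s <= t.
Proof.
  intros Hs Ht Hc. destruct (Rle_lt_dec s t) as [Hle|Hlt]; [exact Hle|].
  pose proof (cosh_lt t s Ht Hlt). lra.
Qed.

Lemma arcosh_cosh t : 0 <= t -> arcosh (cosh t) = t.
Proof.
  intros Ht. unfold arcosh.
  replace (cosh t * cosh t - 1) with ((sinh t)^2) by (pose proof (cosh_sq_sinh_sq t); nra).
  rewrite <- Rsqr_pow2, sqrt_Rsqr by (apply sinh_nonneg, Ht).
  replace (cosh t + sinh t) with (exp t) by (unfold cosh, sinh; field).
  apply ln_exp.
Qed.

Lemma cosh_arcosh m : 1 <= m -> cosh (arcosh m) = m.
Proof.
  intros Hm. unfold arcosh. set (s := sqrt (m * m - 1)).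
  assert (Hs : s * s = m * m - 1) by (apply sqrt_sqrt; nra).
  assert (0 <= s) by apply sqrt_pos.
  assert (Hinv : / (m + s) = m - s).
  { apply (Rmult_eq_reg_l (m + s)); [|lra]. rewrite Rinv_r by lra. nra. }
  unfold cosh. rewrite exp_Ropp, exp_ln, Hinv by lra. lra.
Qed.

Lemma arcosh_nonneg m : 1 <= m -> 0 <= arcosh m.
Proof.
  intros Hm. unfold arcosh. rewrite <- ln_1.
  assert (0 <= sqrt (m * m - 1)) by apply sqrt_pos.
  destruct (Req_dec (m + sqrt (m * m - 1)) 1) as [Heq|Hne]; [rewrite Heq; lra|].
  left. apply ln_increasing; lra.
Qed.

Lemma mink_dist n (x y : Hpt n) : mink n (pt x) (pt y) = - cosh (dH n x y).
Proof.
  unfold dH. rewrite cosh_arcosh by apply mink_le_minus1. fold (@pt n x) (@pt n y). ring.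
Qed.

Lemma dH_nonneg n (x y : Hpt n) : 0 <= dH n x y.
Proof. apply arcosh_nonneg, mink_le_minus1. Qed.

Lemma dH_sym n (x y : Hpt n) : dH n x y = dH n y x.
Proof. unfold dH. rewrite mink_sym. reflexivity. Qed.

Lemma dH_refl n (x : Hpt n) : dH n x x = 0.
Proof.
  unfold dH. fold (@pt n x). rewrite pt_norm.
  replace (- -1) with (cosh 0) by (rewrite cosh_0; ring).
  apply arcosh_cosh. lra.
Qed.

(* Projecting x and z to the tangent space at y and applying Cauchy-Schwarz
   there gives cosh d(x,z) <= cosh (d(x,y) + d(y,z)). *)
Lemma cosh_dist_le_cosh_sum n (x y z : Hpt n) :
  cosh (dH n x z) <= cosh (dH n x y + dH n y z).
Proof.
  set (d1 := dH n x y); set (d2 := dH n y z); set (d3 := dH n x z).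
  assert (M1 : mink n (pt x) (pt y) = - cosh d1) by apply mink_dist.
  assert (M2 : mink n (pt y) (pt z) = - cosh d2) by apply mink_dist.
  assert (M3 : mink n (pt x) (pt z) = - cosh d3) by apply mink_dist.
  set (u := fun i => 1 * pt x i + (- cosh d1) * pt y i).
  set (w := fun i => 1 * pt z i + (- cosh d2) * pt y i).
  assert (Hu : mink n u (pt y) = 0) by (unfold u; rewrite mink_linear, pt_norm, M1; ring).
  assert (Hw : mink n w (pt y) = 0)
    by (unfold w; rewrite mink_linear, pt_norm, (mink_sym n (pt z)), M2; ring).
  pose proof (orthogonal_cauchy_schwarz n y u w Hu Hw) as CS.
  assert (Euu : mink n u u = (sinh d1)^2).
  { unfold u at 1. rewrite mink_linear, (mink_sym n (pt x) u), (mink_sym n (pt y) u).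
    unfold u. rewrite !mink_linear, !pt_norm, (mink_sym n (pt y) (pt x)), M1.
    pose proof (cosh_sq_sinh_sq d1). nra. }
  assert (Eww : mink n w w = (sinh d2)^2).
  { unfold w at 1. rewrite mink_linear, (mink_sym n (pt z) w), (mink_sym n (pt y) w).
    unfold w. rewrite !mink_linear, !pt_norm, (mink_sym n (pt z) (pt y)), M2.
    pose proof (cosh_sq_sinh_sq d2). nra. }
  assert (Euw : mink n u w = cosh d1 * cosh d2 - cosh d3).
  { unfold u at 1. rewrite mink_linear, (mink_sym n (pt x) w), (mink_sym n (pt y) w).
    unfold w. rewrite !mink_linear, !pt_norm, (mink_sym n (pt z) (pt x)),
      (mink_sym n (pt z) (pt y)), (mink_sym n (pt y) (pt x)), M1, M2, M3. ring. }
  rewrite Euu, Eww, Euw in CS.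
  assert (0 <= sinh d1 * sinh d2)
    by (apply Rmult_le_pos; apply sinh_nonneg, dH_nonneg).
  rewrite cosh_plus. nra.
Qed.

Lemma dH_triangle n (x y z : Hpt n) : dH n x z <= dH n x y + dH n y z.
Proof.
  apply cosh_le_inv; [apply dH_nonneg| |apply cosh_dist_le_cosh_sum].
  pose proof (dH_nonneg n x y); pose proof (dH_nonneg n y z). lra.
Qed.

Lemma sinh_difference_identity s t :
  sinh (s + t) * cosh t - sinh t * cosh (s + t) = sinh s.
Proof. exp_identity. Qed.

Lemma segment_null_identity s t :
  - (sinh (s + t))^2 - (sinh s)^2 - (sinh t)^2 + 2 * sinh (s + t) * sinh s * cosh t
  + 2 * sinh (s + t) * sinh t * cosh s - 2 * sinh s * sinh t * cosh (s + t) = 0.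
Proof. exp_identity. Qed.

(* Hyperbolic Stewart theorem: a point a of the segment [x y] with
   t = d(x,a) is the combination (sinh(d - t) x + sinh t y) / sinh d,
   d = d(x,y); pairing with an arbitrary point z gives a relation between
   cosh d(a,z), cosh d(x,z) and cosh d(y,z). *)
Lemma hyperbolic_stewart n (x y a z : Hpt n) :
  between (dH n) x a y ->
  sinh (dH n x y) * cosh (dH n a z)
  = sinh (dH n a y) * cosh (dH n x z) + sinh (dH n x a) * cosh (dH n y z).
Proof.
  unfold between. intros Ha.
  set (t := dH n x a) in *; set (s := dH n a y) in *; set (d := dH n x y) in *.
  assert (Mxa : mink n (pt x) (pt a) = - cosh t) by apply mink_dist.
  assert (May : mink n (pt a) (pt y) = - cosh s) by apply mink_dist.
  assert (Mxy : mink n (pt x) (pt y) = - cosh d) by apply mink_dist.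
  assert (Hd : d = s + t) by lra.
  set (w := fun i => sinh d * pt a i + (- sinh s) * pt x i + (- sinh t) * pt y i).
  assert (Wx : mink n w (pt x) = 0).
  { unfold w. rewrite mink_linear3, !pt_norm, (mink_sym n (pt a)), (mink_sym n (pt y)), Mxa, Mxy.
    rewrite Hd, <- (sinh_difference_identity s t). ring. }
  assert (Ww : mink n w w = 0).
  { unfold w at 1.
    rewrite mink_linear3, (mink_sym n (pt a) w), (mink_sym n (pt x) w), (mink_sym n (pt y) w).
    unfold w. rewrite !mink_linear3, !pt_norm, (mink_sym n (pt a) (pt x)),
      (mink_sym n (pt y) (pt a)), (mink_sym n (pt y) (pt x)), Mxa, May, Mxy, Hd.
    pose proof (segment_null_identity s t). lra. }
  pose proof (null_orthogonal_zero n x w Wx Ww (pt z)) as Hz.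
  unfold w in Hz. rewrite mink_linear3, !mink_dist in Hz. lra.
Qed.

Lemma between_degenerate n (x y z : Hpt n) :
  between (dH n) x z y -> dH n x y = 0 -> dH n x z = 0.
Proof. unfold between. pose proof (dH_nonneg n x z); pose proof (dH_nonneg n z y). lra. Qed.

Lemma sinh_cosh_combination d a b :
  sinh (d - a) * cosh b + sinh a * cosh (d - b) = sinh d * cosh (a - b).
Proof. exp_identity. Qed.

Lemma dH_on_segment n (x y z w : Hpt n) :
  between (dH n) x z y -> between (dH n) x w y ->
  dH n z w = Rabs (dH n x z - dH n x w).
Proof.
  intros Hz Hw. pose proof (dH_nonneg n x y).
  destruct (Req_dec (dH n x y) 0) as [Hdeg|Hnd].
  - pose proof (between_degenerate n x y z Hz Hdeg) as Hz0.
    pose proof (between_degenerate n x y w Hw Hdeg) as Hw0.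
    pose proof (dH_triangle n z x w) as Htri. pose proof (dH_nonneg n z w).
    rewrite (dH_sym n z x) in Htri. rewrite Hz0, Hw0, Rminus_0_r, Rabs_R0. lra.
  - assert (Hsd : 0 < sinh (dH n x y)) by (apply sinh_pos; lra).
    pose proof (hyperbolic_stewart n x y z w Hz) as Hst.
    rewrite (dH_sym n y w) in Hst.
    unfold between in Hz, Hw.
    replace (dH n z y) with (dH n x y - dH n x z) in Hst by lra.
    replace (dH n w y) with (dH n x y - dH n x w) in Hst by lra.
    rewrite sinh_cosh_combination in Hst.
    assert (Hch : cosh (dH n z w) = cosh (Rabs (dH n x z - dH n x w))).
    { rewrite cosh_abs. apply (Rmult_eq_reg_l (sinh (dH n x y))); lra. }
    rewrite <- (arcosh_cosh (dH n z w)), Hch by apply dH_nonneg.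
    apply arcosh_cosh, Rabs_pos.
Qed.

Lemma geodesic_norm_identity d t :
  (sinh (d - t))^2 + (sinh t)^2 + 2 * sinh (d - t) * sinh t * cosh d = (sinh d)^2.
Proof. exp_identity. Qed.

Lemma geodesic_start_identity d t :
  sinh (d - t) + sinh t * cosh d = sinh d * cosh t.
Proof. exp_identity. Qed.

Lemma geodesic_end_identity d t :
  sinh (d - t) * cosh d + sinh t = sinh d * cosh (d - t).
Proof. exp_identity. Qed.

(* The point at distance t from x on the segment [x y] (for x <> y). *)
Definition geodesic_combination n (x y : Hpt n) (t : R) : nat -> R :=
  fun i => sinh (dH n x y - t) / sinh (dH n x y) * pt x i
           + sinh t / sinh (dH n x y) * pt y i.

Section GeodesicCombination.
Variables (n : nat) (x y : Hpt n) (t : R).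
Hypothesis dist_pos : 0 < dH n x y.

Let d := dH n x y.
Let v := geodesic_combination n x y t.

Lemma sinh_dist_pos : 0 < sinh d.
Proof. apply sinh_pos, dist_pos. Qed.

Lemma geodesic_combination_start : - mink n (pt x) v = cosh t.
Proof.
  pose proof sinh_dist_pos. rewrite mink_sym. unfold v, geodesic_combination.
  rewrite mink_linear, pt_norm, (mink_sym n (pt y)), mink_dist. fold d.
  apply (Rmult_eq_reg_l (sinh d)); [|lra].
  rewrite <- geodesic_start_identity. field. lra.
Qed.

Lemma geodesic_combination_end : - mink n v (pt y) = cosh (d - t).
Proof.
  pose proof sinh_dist_pos. unfold v, geodesic_combination.
  rewrite mink_linear, pt_norm, mink_dist. fold d.
  apply (Rmult_eq_reg_l (sinh d)); [|lra].
  rewrite <- geodesic_end_identity. field. lra.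
Qed.

Lemma geodesic_combination_norm : mink n v v = -1.
Proof.
  pose proof sinh_dist_pos.
  assert (Hxv : mink n (pt x) v = - cosh t) by (pose proof geodesic_combination_start; lra).
  assert (Hyv : mink n (pt y) v = - cosh (d - t))
    by (rewrite mink_sym; pose proof geodesic_combination_end; lra).
  unfold v at 1, geodesic_combination. fold d.
  rewrite mink_linear, Hxv, Hyv.
  apply (Rmult_eq_reg_l ((sinh d)^2)); [|nra].
  transitivity (- (sinh (d - t) * (sinh d * cosh t) + sinh t * (sinh d * cosh (d - t))));
    [field; lra|].
  rewrite <- geodesic_start_identity, <- geodesic_end_identity,
    <- (geodesic_norm_identity d t). ring.
Qed.

Lemma geodesic_combination_timelike : 0 <= t <= d -> 0 < v 0%nat.
Proof.
  intros Ht. pose proof sinh_dist_pos.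
  pose proof (pt_pos n x); pose proof (pt_pos n y).
  assert (Hcoef : forall s, 0 <= s -> 0 <= sinh s / sinh d).
  { intros s Hs. apply Rmult_le_pos; [apply sinh_nonneg, Hs|left; apply Rinv_0_lt_compat; lra]. }
  pose proof (Hcoef (d - t) ltac:(lra)). pose proof (Hcoef t ltac:(lra)).
  unfold v, geodesic_combination. fold d.
  destruct (Req_dec t 0) as [Ht0|Ht0].
  - assert (0 < sinh (d - t) / sinh d)
      by (rewrite Ht0, Rminus_0_r; apply Rdiv_lt_0_compat; lra). nra.
  - assert (0 < sinh t / sinh d) by (apply Rdiv_lt_0_compat; [apply sinh_pos|]; lra). nra.
Qed.

End GeodesicCombination.

Lemma segment_point_exists n (x y : Hpt n) t :
  0 <= t <= dH n x y -> exists z : Hpt n, between (dH n) x z y /\ dH n x z = t.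
Proof.
  intros Ht. unfold between.
  destruct (Req_dec (dH n x y) 0) as [Hdeg|Hnd].
  { exists x. rewrite dH_refl. lra. }
  assert (Hd : 0 < dH n x y) by lra.
  set (v := geodesic_combination n x y t).
  assert (Hvan : forall i, (n < i)%nat -> v i = 0)
    by (intros i Hi; unfold v, geodesic_combination; rewrite !pt_vanish by exact Hi; ring).
  set (z := exist _ v (conj (geodesic_combination_norm n x y t Hd)
                       (conj (geodesic_combination_timelike n x y t Hd Ht) Hvan)) : Hpt n).
  assert (Dxz : dH n x z = t).
  { unfold dH. change (proj1_sig z) with (geodesic_combination n x y t). fold (@pt n x).
    rewrite (geodesic_combination_start n x y t Hd). apply arcosh_cosh. lra. }
  assert (Dzy : dH n z y = dH n x y - t).
  { unfold dH at 1. change (proj1_sig z) with (geodesic_combination n x y t). fold (@pt n y).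
    rewrite (geodesic_combination_end n x y t Hd). apply arcosh_cosh. lra. }
  exists z. rewrite Dxz, Dzy. lra.
Qed.

Lemma insize_key_inequality P iP a ia w :
  P * iP = 1 -> a * ia = 1 -> 1 <= P -> 1 <= a -> 2 <= w -> w <= P + iP ->
  0 <= 2 * (P + iP) - (a * iP + P * ia) + w * (a + ia - 3).
Proof.
  intros HP Ha HP1 Ha1 Hw2 HwP.
  assert (0 < iP) by nra. assert (0 < ia) by nra. assert (iP <= 1) by nra. assert (ia <= 1) by nra.
  destruct (Rle_lt_dec 0 (a + ia - 3)) as [Hs|Hs].
  - assert (w * (a + ia - 3) >= 2 * (a + ia - 3)) by nra.
    assert (Hsplit : 2 * (P + iP) - (a * iP + P * ia) + 2 * (a + ia - 3)
                     = (a + ia - 2) + (P - 1) * (2 - ia - 2 * iP + a * iP)).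
    { assert (iP - 1 = - (P - 1) * iP) by nra. nra. }
    assert (0 <= 2 - ia - 2 * iP + a * iP) by nra.
    assert (0 <= (P - 1) * (2 - ia - 2 * iP + a * iP)) by (apply Rmult_le_pos; lra).
    lra.
  - assert (w * (a + ia - 3) >= (P + iP) * (a + ia - 3)) by nra.
    assert (Hfact : 2 * (P + iP) - (a * iP + P * ia) + (P + iP) * (a + ia - 3)
                    = (a - 1) * (P - ia * iP)) by nra.
    assert (0 <= (a - 1) * (P - ia * iP)) by (apply Rmult_le_pos; nra).
    lra.
Qed.

(* The value of sinh p sinh q cosh d(z,w) in [insize_cosh_formula], where
   u = p - t, v = q - t and e is the third side. *)
Definition insize_expression u v t e :=
  sinh (v + t) * sinh u * cosh t + sinh t * sinh v * cosh (u + t) + (sinh t)^2 * cosh e.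

Lemma insize_expression_exp u v t :
  8 * (3/2 * (sinh (u + t) * sinh (v + t)) - insize_expression u v t (u + v))
  = 2 * (exp (u + v) + exp (- (u + v)))
    - (exp (t + t) * exp (- (u + v)) + exp (u + v) * exp (- (t + t)))
    + (exp (u - v) + exp (- (u - v))) * (exp (t + t) + exp (- (t + t)) - 3).
Proof. unfold insize_expression. exp_identity. Qed.

Lemma exp_ge_1 s : 0 <= s -> 1 <= exp s.
Proof.
  intros Hs. rewrite <- exp_0.
  destruct (Req_dec s 0) as [->|Hne]; [lra|left; apply exp_increasing; lra].
Qed.

Lemma exp_opp_inv s : exp s * exp (- s) = 1.
Proof. rewrite <- exp_plus, Rplus_opp_r. apply exp_0. Qed.

(* The degenerate triangle e = u + v is the extremal case. *)
Lemma insize_expression_degenerate_bound u v t : 0 <= u -> 0 <= v -> 0 <= t ->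
  insize_expression u v t (u + v) <= 5/3 * (sinh (u + t) * sinh (v + t)).
Proof.
  intros Hu Hv Ht.
  pose proof (insize_expression_exp u v t) as Hexp.
  assert (HQ : exp (u - v) <= exp (u + v)).
  { destruct (Req_dec v 0) as [->|Hne]; [right; f_equal; ring|left; apply exp_increasing; lra]. }
  assert (HiQ : exp (- (u - v)) <= exp (u + v)).
  { destruct (Req_dec u 0) as [->|Hne]; [right; f_equal; ring|left; apply exp_increasing; lra]. }
  set (P := exp (u + v)) in *. set (iP := exp (- (u + v))) in *.
  set (a := exp (t + t)) in *. set (ia := exp (- (t + t))) in *.
  set (Q := exp (u - v)) in *. set (iQ := exp (- (u - v))) in *.
  assert (HPi : P * iP = 1) by apply exp_opp_inv.
  assert (Hai : a * ia = 1) by apply exp_opp_inv.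
  assert (HQi : Q * iQ = 1) by apply exp_opp_inv.
  assert (HP1 : 1 <= P) by (apply exp_ge_1; lra).
  assert (Ha1 : 1 <= a) by (apply exp_ge_1; lra).
  assert (0 < Q) by apply exp_pos. assert (0 < iQ) by apply exp_pos.
  assert (0 < iP) by apply exp_pos.
  assert (HQ2 : 2 <= Q + iQ)
    by (assert (0 <= (Q - 1)^2 * iQ) by (apply Rmult_le_pos; [apply pow2_ge_0|lra]); nra).
  assert (HQP : Q + iQ <= P + iP).
  { assert (Q + iQ - P - iP = (Q - P) * (1 - iQ * iP)).
    { assert (iQ = iQ * (P * iP)) by (rewrite HPi; ring).
      assert (iP = iP * (Q * iQ)) by (rewrite HQi; ring). nra. }
    assert (iQ * iP <= P * iP) by (apply Rmult_le_compat_r; lra).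
    assert ((Q - P) * (1 - iQ * iP) <= 0) by nra.
    lra. }
  pose proof (insize_key_inequality P iP a ia (Q + iQ) HPi Hai HP1 Ha1 HQ2 HQP).
  assert (0 <= sinh (u + t) * sinh (v + t)) by (apply Rmult_le_pos; apply sinh_nonneg; lra).
  lra.
Qed.

Lemma insize_expression_bound u v t e : 0 <= u -> 0 <= v -> 0 <= t -> 0 <= e <= u + v ->
  insize_expression u v t e <= 5/3 * (sinh (u + t) * sinh (v + t)).
Proof.
  intros Hu Hv Ht He.
  apply Rle_trans with (insize_expression u v t (u + v));
    [|apply insize_expression_degenerate_bound; assumption].
  unfold insize_expression.
  assert (cosh e <= cosh (u + v)) by (apply cosh_le; lra).
  assert (0 <= (sinh t)^2) by apply pow2_ge_0.
  assert ((sinh t)^2 * cosh e <= (sinh t)^2 * cosh (u + v)) by (apply Rmult_le_compat_l; lra).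
  lra.
Qed.

(* Two applications of the Stewart theorem compute d(z,w) for z in [x1 x2]
   and w in [x1 x3] at the same distance t from x1. *)
Lemma insize_cosh_formula n (x1 x2 x3 z w : Hpt n) t :
  between (dH n) x1 z x2 -> between (dH n) x1 w x3 -> dH n x1 z = t -> dH n x1 w = t ->
  sinh (dH n x1 x2) * sinh (dH n x1 x3) * cosh (dH n z w)
  = insize_expression (dH n x1 x2 - t) (dH n x1 x3 - t) t (dH n x2 x3).
Proof.
  intros Bz Bw Hz Hw.
  pose proof (hyperbolic_stewart n x1 x2 z w Bz) as S1.
  pose proof (hyperbolic_stewart n x1 x3 w x2 Bw) as S2.
  unfold between in Bz, Bw.
  replace (dH n z x2) with (dH n x1 x2 - t) in S1 by lra.
  replace (dH n w x3) with (dH n x1 x3 - t) in S2 by lra.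
  rewrite Hz, Hw, (dH_sym n x2 w) in S1. rewrite Hw, (dH_sym n x3 x2) in S2.
  unfold insize_expression.
  replace (dH n x1 x3 - t + t) with (dH n x1 x3) by ring.
  replace (dH n x1 x2 - t + t) with (dH n x1 x2) by ring.
  transitivity (sinh (dH n x1 x3) * (sinh (dH n x1 x2) * cosh (dH n z w))); [ring|].
  rewrite S1.
  transitivity (sinh (dH n x1 x3) * sinh (dH n x1 x2 - t) * cosh t
                + sinh t * (sinh (dH n x1 x3) * cosh (dH n w x2))); [ring|].
  rewrite S2. ring.
Qed.

Lemma cosh_ln3 : cosh (ln 3) = 5/3.
Proof. unfold cosh. rewrite exp_Ropp, exp_ln by lra. field. Qed.

Lemma ln3_pos : 0 < ln 3.
Proof. rewrite <- ln_1. apply ln_increasing; lra. Qed.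

Lemma dH_insize n (x1 x2 x3 z w : Hpt n) :
  between (dH n) x1 z x2 -> between (dH n) x1 w x3 -> dH n x1 z = dH n x1 w ->
  2 * dH n x1 z <= dH n x1 x2 + dH n x1 x3 - dH n x2 x3 ->
  dH n z w <= ln 3.
Proof.
  intros Bz Bw Hzw Ht.
  pose proof (insize_cosh_formula n x1 x2 x3 z w (dH n x1 z) Bz Bw eq_refl (eq_sym Hzw))
    as Hformula.
  unfold between in Bz, Bw.
  pose proof ln3_pos. pose proof (dH_nonneg n x1 z).
  pose proof (dH_nonneg n z x2). pose proof (dH_nonneg n w x3). pose proof (dH_nonneg n x2 x3).
  destruct (Req_dec (dH n x1 z) 0) as [Ht0|Ht0].
  { pose proof (dH_triangle n z x1 w) as Htri. rewrite (dH_sym n z x1) in Htri. lra. }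
  assert (Hsp : 0 < sinh (dH n x1 x2)) by (apply sinh_pos; lra).
  assert (Hsq : 0 < sinh (dH n x1 x3)) by (apply sinh_pos; lra).
  pose proof (insize_expression_bound (dH n x1 x2 - dH n x1 z) (dH n x1 x3 - dH n x1 z)
                (dH n x1 z) (dH n x2 x3) ltac:(lra) ltac:(lra) ltac:(lra) ltac:(lra)) as Hbound.
  replace (dH n x1 x2 - dH n x1 z + dH n x1 z) with (dH n x1 x2) in Hbound by ring.
  replace (dH n x1 x3 - dH n x1 z + dH n x1 z) with (dH n x1 x3) in Hbound by ring.
  assert (Hch : cosh (dH n z w) <= 5/3).
  { apply (Rmult_le_reg_l (sinh (dH n x1 x2) * sinh (dH n x1 x3))); nra. }
  apply cosh_le_inv; [apply dH_nonneg|lra|]. rewrite cosh_ln3. exact Hch.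
Qed.

Lemma between_sym {U : Type} (d : U -> U -> R) :
  (forall a b, d a b = d b a) -> forall a y b, between d a y b -> between d b y a.
Proof. unfold between. intros Hsym a y b. rewrite (Hsym b y), (Hsym y a), (Hsym b a). lra. Qed.

Section Trees.
Variables (T : Type) (dT : T -> T -> R).
Hypothesis dT_metric : is_metric dT.
Hypothesis dT_zero_hyperbolic : zero_hyperbolic dT.

Lemma dT_nonneg a b : 0 <= dT a b.
Proof. apply dT_metric. Qed.

Lemma dT_refl a : dT a a = 0.
Proof. apply dT_metric. reflexivity. Qed.

Lemma dT_sym a b : dT a b = dT b a.
Proof. apply dT_metric. Qed.

Lemma dT_triangle a b c : dT a c <= dT a b + dT b c.
Proof. apply dT_metric. Qed.

Lemma tree_on_segment a b y y' :
  between dT a y b -> between dT a y' b -> dT y y' = Rabs (dT a y - dT a y').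
Proof.
  unfold between. intros By By'.
  pose proof (dT_zero_hyperbolic a b y y') as F. rewrite (dT_sym b y'), (dT_sym b y) in F.
  pose proof (dT_triangle a y y'). pose proof (dT_triangle a y' y) as Hrev.
  rewrite (dT_sym y' y) in Hrev.
  unfold Rmax in F. destruct (Rle_dec _ _); unfold Rabs; destruct (Rcase_abs _); lra.
Qed.

Lemma between_extend a y o b : between dT a o b -> between dT a y o -> between dT a y b.
Proof.
  unfold between. intros Bo By. pose proof (dT_triangle y o b). pose proof (dT_triangle a y b).
  lra.
Qed.

Lemma tree_segment_split o Pa Pb y :
  between dT Pa o Pb -> between dT Pa y Pb -> between dT Pa y o \/ between dT Pb y o.
Proof.
  intros Bo By. pose proof (tree_on_segment Pa Pb y o By Bo) as Hyo. unfold between in *.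
  rewrite (dT_sym Pb y), (dT_sym Pb o).
  destruct (Rle_dec (dT Pa y) (dT Pa o)); [left|right]; rewrite Hyo;
    unfold Rabs; destruct (Rcase_abs _); lra.
Qed.

Definition on_tree_leg (o P y : T) (k : R) : Prop := between dT P y o /\ dT y o = k.

Lemma tree_leg_same o P y y' k k' :
  on_tree_leg o P y k -> on_tree_leg o P y' k' -> dT y y' = Rabs (k - k').
Proof.
  intros [By Hk] [By' Hk']. rewrite (tree_on_segment P o y y' By By'). unfold between in *.
  replace (dT P y - dT P y') with (- (k - k')) by lra. apply Rabs_Ropp.
Qed.

Lemma tree_leg_opposite o Pa Pb y y' k k' : between dT Pa o Pb ->
  on_tree_leg o Pa y k -> on_tree_leg o Pb y' k' -> dT y y' = k + k'.
Proof.
  intros Bo [By Hk] [By' Hk'].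
  assert (Y : between dT Pa y Pb) by (apply (between_extend Pa y o Pb); assumption).
  assert (Y' : between dT Pa y' Pb).
  { apply (between_sym dT dT_sym), (between_extend Pb y' o Pa); [|exact By'].
    apply (between_sym dT dT_sym), Bo. }
  pose proof (dT_nonneg y o). pose proof (dT_nonneg y' o).
  rewrite (tree_on_segment Pa Pb y y' Y Y'). unfold between in *.
  rewrite (dT_sym o Pb) in Bo. rewrite (dT_sym y' Pb) in Y'.
  rewrite Rabs_left1; lra.
Qed.

(* If o is the branch point of the tripod spanned by Pa, Pb, Pc, then
   d(Pa,o) is the tree Gromov product; when the pairwise distances are
   E-approximations from below of the distances of xa, xb, xc, it is an
   E-approximation of their Gromov product. *)
Lemma branch_distance_estimate {U : Type} (d : U -> U -> R) (xa xb xc : U) (Pa Pb Pc o : T) E :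
  between dT Pa o Pb -> between dT Pa o Pc -> between dT Pb o Pc ->
  d xa xb - E <= dT Pa Pb <= d xa xb -> d xa xc - E <= dT Pa Pc <= d xa xc ->
  d xb xc - E <= dT Pb Pc <= d xb xc ->
  Rabs (dT Pa o - (d xa xb + d xa xc - d xb xc) / 2) <= E.
Proof.
  unfold between. intros Bab Bac Bbc Hab Hac Hbc.
  rewrite (dT_sym Pb o) in Bbc.
  unfold Rabs. destruct (Rcase_abs _); lra.
Qed.

End Trees.

(* A relation between A and B which contains the graph of f, reaches every
   point of B and distorts distances by at most K makes f a
   (1, K)-quasi-isometry; a quasi-inverse picks a related point. *)
Lemma correspondence_quasi_isometry {U V : Type} (dU : U -> U -> R) (A : U -> Prop)
    (dV : V -> V -> R) (B : V -> Prop) (f : U -> V) (Rel : U -> V -> Prop) (K : R) :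
  inhabited U -> (forall a, dU a a = 0) -> (forall y, dV y y = 0) ->
  (forall a, A a -> B (f a) /\ Rel a (f a)) ->
  (forall y, B y -> exists a, A a /\ Rel a y) ->
  (forall a b y z, Rel a y -> Rel b z -> Rabs (dU a b - dV y z) <= K) ->
  quasi_isometry dU A dV B f 1 K.
Proof.
  intros [u0] HU HV Hgraph Hsurj Hdist.
  assert (Hchoice : forall y, exists a, B y -> A a /\ Rel a y).
  { intros y. destruct (classic (B y)) as [Hy|Hy].
    - destruct (Hsurj y Hy) as [a Ha]. exists a. intros _. exact Ha.
    - exists u0. intros Hy'. contradiction. }
  destruct (choice _ Hchoice) as [g Hg].
  assert (Hbound : forall a b y z, Rel a y -> Rel b z ->
            - K + 1 / 1 * dU a b <= dV y z <= 1 * dU a b + K /\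
            - K + 1 / 1 * dV y z <= dU a b <= 1 * dV y z + K).
  { intros a b y z Ray Rbz. pose proof (Hdist a b y z Ray Rbz).
    unfold Rabs in *. destruct (Rcase_abs _); split; split; lra. }
  split; [intros a Ha; apply Hgraph, Ha|].
  split.
  { intros a b Ha Hb. apply (Hbound a b); apply Hgraph; assumption. }
  exists g. split; [intros y Hy; apply Hg, Hy|].
  split; [|split].
  - intros y z Hy Hz. apply (Hbound (g y) (g z) y z); apply Hg; assumption.
  - intros a Ha. destruct (Hgraph a Ha) as [Hfa Ra]. destruct (Hg _ Hfa) as [_ Rg].
    destruct (Hbound a (g (f a)) (f a) (f a) Ra Rg) as [_ H]. rewrite HV in H. lra.
  - intros y Hy. destruct (Hg y Hy) as [Ag Rg]. destruct (Hgraph _ Ag) as [_ Rf].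
    destruct (Hbound (g y) (g y) y (f (g y)) Rg Rf) as [H _]. rewrite HU in H. lra.
Qed.

Definition triangle_union {U : Type} (d : U -> U -> R) (a b c : U) (z : U) : Prop :=
  between d a z b \/ between d a z c \/ between d b z c.

Lemma dilation_height_error g r t E : 0 <= t <= g -> Rabs (r - g) <= E ->
  Rabs ((g - t) - (r - r / g * t)) <= E.
Proof.
  intros Ht Hr. destruct (Req_dec g 0) as [Hg|Hg].
  - replace t with 0 by lra. rewrite Hg in *.
    replace (0 - 0 - (r - r / 0 * 0)) with (- (r - 0)) by ring. rewrite Rabs_Ropp. exact Hr.
  - replace (g - t - (r - r / g * t)) with ((g - t) / g * (g - r)) by (field; exact Hg).
    assert (Hq : (g - t) / g * g = g - t) by (field; exact Hg).
    assert (0 <= (g - t) / g <= 1) by (split; nra).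
    rewrite Rabs_mult, Rabs_minus_sym, (Rabs_right ((g - t) / g)) by lra.
    pose proof (Rabs_pos (r - g)). nra.
Qed.

(* The only properties of the hyperbolic distance used by the comparison:
   it is a metric in which points of a segment are located by their
   distance to an endpoint, every such distance is realised, and triangles
   have insize at most kappa. *)
Section InsizeGeometry.
Variables (U : Type) (d : U -> U -> R) (kappa : R).
Hypothesis d_sym : forall a b, d a b = d b a.
Hypothesis d_triangle : forall a b c, d a c <= d a b + d b c.
Hypothesis d_refl : forall a, d a a = 0.
Hypothesis d_on_segment : forall x y z w,
  between d x z y -> between d x w y -> d z w = Rabs (d x z - d x w).
Hypothesis d_segment_point : forall x y t,
  0 <= t <= d x y -> exists z, between d x z y /\ d x z = t.
Hypothesis d_insize : forall x y y' z w,
  between d x z y -> between d x w y' -> d x z = d x w ->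
  2 * d x z <= d x y + d x y' - d y y' -> d z w <= kappa.

Lemma d_nonneg a b : 0 <= d a b.
Proof. pose proof (d_triangle a b a) as H. rewrite d_refl, (d_sym b a) in H. lra. Qed.

(* The Gromov product (b|c)_a: the distance from a to the internal points
   of the triangle abc on the sides through a. *)
Definition gromov_product (a b c : U) : R := (d a b + d a c - d b c) / 2.

Lemma gromov_product_sym a b c : gromov_product a b c = gromov_product a c b.
Proof. unfold gromov_product. rewrite (d_sym b c). lra. Qed.

Lemma gromov_product_bounds a b c : 0 <= gromov_product a b c <= d a b.
Proof.
  unfold gromov_product. pose proof (d_triangle b a c) as H. pose proof (d_triangle a b c).
  rewrite (d_sym b a) in H. lra.
Qed.

Lemma gromov_product_sum a b c : gromov_product a b c + gromov_product b a c = d a b.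
Proof. unfold gromov_product. rewrite (d_sym b a). lra. Qed.

Definition on_leg (xa xb xc z : U) (h : R) : Prop :=
  (between d xa z xb \/ between d xa z xc) /\ 0 <= h <= gromov_product xa xb xc /\
  d xa z = gromov_product xa xb xc - h.

Lemma on_leg_swap xa xb xc z h : on_leg xa xb xc z h -> on_leg xa xc xb z h.
Proof. unfold on_leg. rewrite gromov_product_sym. intros [[Hb|Hc] Hh]; auto. Qed.

Lemma on_leg_projection xa xb xc z h : on_leg xa xb xc z h ->
  exists z', between d xa z' xb /\ d xa z' = gromov_product xa xb xc - h /\ d z z' <= kappa.
Proof.
  intros [Hside [Hh Hz]]. pose proof (gromov_product_bounds xa xb xc).
  destruct (d_segment_point xa xb (gromov_product xa xb xc - h)) as [z' [Bz' Hz']]; [lra|].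
  exists z'. split; [exact Bz'|split; [exact Hz'|]].
  destruct Hside as [Bz|Bz]; apply (d_insize xa _ _ z z' Bz Bz'); try lra.
  - rewrite d_refl. lra.
  - unfold gromov_product in *. rewrite (d_sym xc xb). lra.
Qed.

Lemma distance_perturbation z z' w w' :
  d z z' <= kappa -> d w w' <= kappa -> Rabs (d z w - d z' w') <= 2 * kappa.
Proof.
  intros Hz Hw.
  pose proof (d_triangle z z' w). pose proof (d_triangle z' w' w) as H1.
  pose proof (d_triangle z' z w') as H2. pose proof (d_triangle z w w').
  rewrite (d_sym w' w) in H1. rewrite (d_sym z' z) in H2.
  unfold Rabs. destruct (Rcase_abs _); lra.
Qed.

Lemma on_leg_same xa xb xc z w h h' :
  on_leg xa xb xc z h -> on_leg xa xb xc w h' -> Rabs (d z w - Rabs (h - h')) <= 2 * kappa.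
Proof.
  intros Lz Lw.
  destruct (on_leg_projection _ _ _ _ _ Lz) as [z' [Bz' [Hz' Nz]]].
  destruct (on_leg_projection _ _ _ _ _ Lw) as [w' [Bw' [Hw' Nw]]].
  replace (Rabs (h - h')) with (d z' w').
  - apply distance_perturbation; assumption.
  - rewrite (d_on_segment xa xb z' w' Bz' Bw'), Hz', Hw', Rabs_minus_sym. f_equal. ring.
Qed.

Lemma on_leg_opposite xa xb xc z w h h' :
  on_leg xa xb xc z h -> on_leg xb xa xc w h' -> Rabs (d z w - (h + h')) <= 2 * kappa.
Proof.
  intros Lz Lw. pose proof Lz as [_ [Hh _]]. pose proof Lw as [_ [Hh' _]].
  pose proof (gromov_product_sum xa xb xc).
  destruct (on_leg_projection _ _ _ _ _ Lz) as [z' [Bz' [Hz' Nz]]].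
  destruct (on_leg_projection _ _ _ _ _ Lw) as [w' [Bw' [Hw' Nw]]].
  apply (between_sym d d_sym) in Bw'.
  assert (Hw'a : d xa w' = d xa xb - (gromov_product xb xa xc - h')).
  { unfold between in Bw'. rewrite (d_sym xb w') in Hw'. lra. }
  replace (h + h') with (d z' w').
  - apply distance_perturbation; assumption.
  - rewrite (d_on_segment xa xb z' w' Bz' Bw'), Hz', Hw'a, Rabs_left1; lra.
Qed.

Section TripodComparison.
Variables (T : Type) (dT : T -> T -> R).
Hypothesis dT_metric : is_metric dT.
Hypothesis dT_zero_hyperbolic : zero_hyperbolic dT.

Variables (x1 x2 x3 : U) (P1 P2 P3 o : T) (E : R).
Hypothesis branch12 : between dT P1 o P2.
Hypothesis branch13 : between dT P1 o P3.
Hypothesis branch23 : between dT P2 o P3.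
Local Notation gp := gromov_product.
Hypothesis leg1_length : Rabs (dT P1 o - gp x1 x2 x3) <= E.
Hypothesis leg2_length : Rabs (dT P2 o - gp x2 x1 x3) <= E.
Hypothesis leg3_length : Rabs (dT P3 o - gp x3 x1 x2) <= E.

Definition leg_match (xa xb xc : U) (Pa : T) (z : U) (y : T) : Prop :=
  exists h k, on_leg xa xb xc z h /\ on_tree_leg T dT o Pa y k /\ Rabs (h - k) <= E.

Definition corresponds (z : U) (y : T) : Prop :=
  leg_match x1 x2 x3 P1 z y \/ leg_match x2 x1 x3 P2 z y \/ leg_match x3 x1 x2 P3 z y.

Lemma leg_match_swap xa xb xc Pa z y :
  leg_match xa xb xc Pa z y -> leg_match xa xc xb Pa z y.
Proof.
  intros [h [k [Lz [Ly Hhk]]]]. exists h, k. split; [|split]; try assumption.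
  apply on_leg_swap, Lz.
Qed.

Lemma leg_match_same xa xb xc Pa z z' y y' :
  leg_match xa xb xc Pa z y -> leg_match xa xb xc Pa z' y' ->
  Rabs (d z z' - dT y y') <= 2 * E + 2 * kappa.
Proof.
  intros [h [k [Lz [Ly Hhk]]]] [h' [k' [Lz' [Ly' Hhk']]]].
  pose proof (on_leg_same _ _ _ _ _ _ _ Lz Lz') as Hd.
  rewrite (tree_leg_same T dT dT_metric dT_zero_hyperbolic _ _ _ _ _ _ Ly Ly').
  revert Hd Hhk Hhk'. unfold Rabs. repeat destruct (Rcase_abs _); lra.
Qed.

Lemma leg_match_opposite xa xb xc Pa Pb z z' y y' : between dT Pa o Pb ->
  leg_match xa xb xc Pa z y -> leg_match xb xa xc Pb z' y' ->
  Rabs (d z z' - dT y y') <= 2 * E + 2 * kappa.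
Proof.
  intros Bo [h [k [Lz [Ly Hhk]]]] [h' [k' [Lz' [Ly' Hhk']]]].
  pose proof (on_leg_opposite _ _ _ _ _ _ _ Lz Lz') as Hd.
  rewrite (tree_leg_opposite T dT dT_metric dT_zero_hyperbolic _ _ _ _ _ _ _ Bo Ly Ly').
  revert Hd Hhk Hhk'. unfold Rabs. repeat destruct (Rcase_abs _); lra.
Qed.

Lemma corresponds_distortion z z' y y' : corresponds z y -> corresponds z' y' ->
  Rabs (d z z' - dT y y') <= 2 * E + 2 * kappa.
Proof.
  pose proof (between_sym dT (dT_sym T dT dT_metric)) as Bsym.
  intros [M|[M|M]] [M'|[M'|M']].
  - exact (leg_match_same _ _ _ _ _ _ _ _ M M').
  - exact (leg_match_opposite _ _ _ _ _ _ _ _ _ branch12 M M').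
  - exact (leg_match_opposite _ _ _ _ _ _ _ _ _ branch13 (leg_match_swap _ _ _ _ _ _ M) M').
  - exact (leg_match_opposite _ _ _ _ _ _ _ _ _ (Bsym _ _ _ branch12) M M').
  - exact (leg_match_same _ _ _ _ _ _ _ _ M M').
  - exact (leg_match_opposite _ _ _ _ _ _ _ _ _ branch23 (leg_match_swap _ _ _ _ _ _ M)
             (leg_match_swap _ _ _ _ _ _ M')).
  - exact (leg_match_opposite _ _ _ _ _ _ _ _ _ (Bsym _ _ _ branch13) M
             (leg_match_swap _ _ _ _ _ _ M')).
  - exact (leg_match_opposite _ _ _ _ _ _ _ _ _ (Bsym _ _ _ branch23)
             (leg_match_swap _ _ _ _ _ _ M) (leg_match_swap _ _ _ _ _ _ M')).
  - exact (leg_match_same _ _ _ _ _ _ _ _ M M').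
Qed.

Lemma tree_leg_preimage xa xb xc Pa y :
  Rabs (dT Pa o - gp xa xb xc) <= E -> between dT Pa y o ->
  exists z, between d xa z xb /\ leg_match xa xb xc Pa z y.
Proof.
  intros Hlen By. set (g := gp xa xb xc) in *.
  pose proof (gromov_product_bounds xa xb xc) as Hg. fold g in Hg.
  pose proof (dT_nonneg T dT dT_metric Pa y). pose proof (dT_nonneg T dT dT_metric y o).
  set (k := dT y o) in *. set (h := Rmin k g).
  assert (Hh : 0 <= h <= g) by (unfold h, Rmin; destruct (Rle_dec _ _); lra).
  assert (Hhk : Rabs (h - k) <= E).
  { unfold h, Rmin. unfold between in By. fold k in By.
    destruct (Rle_dec k g); revert Hlen; unfold Rabs; repeat destruct (Rcase_abs _); lra. }
  destruct (d_segment_point xa xb (g - h)) as [z [Bz Hz]]; [lra|].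
  exists z. split; [exact Bz|]. exists h, k.
  split; [|split; [split; [exact By|reflexivity]|exact Hhk]].
  split; [left; exact Bz|split; [exact Hh|exact Hz]].
Qed.

Lemma tripod_preimage y : triangle_union dT P1 P2 P3 y ->
  exists z, triangle_union d x1 x2 x3 z /\ corresponds z y.
Proof.
  pose proof (tree_segment_split T dT dT_metric dT_zero_hyperbolic) as Hsplit.
  pose proof (between_sym d d_sym) as Bsym.
  assert (Leg1 : between dT P1 y o -> exists z, triangle_union d x1 x2 x3 z /\ corresponds z y).
  { intros By. destruct (tree_leg_preimage x1 x2 x3 P1 y leg1_length By) as [z [Bz M]].
    exists z. split; [left; exact Bz|left; exact M]. }
  assert (Leg2 : between dT P2 y o -> exists z, triangle_union d x1 x2 x3 z /\ corresponds z y).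
  { intros By. destruct (tree_leg_preimage x2 x1 x3 P2 y leg2_length By) as [z [Bz M]].
    exists z. split; [left; apply Bsym, Bz|right; left; exact M]. }
  assert (Leg3 : between dT P3 y o -> exists z, triangle_union d x1 x2 x3 z /\ corresponds z y).
  { intros By. destruct (tree_leg_preimage x3 x1 x2 P3 y leg3_length By) as [z [Bz M]].
    exists z. split; [right; left; apply Bsym, Bz|right; right; exact M]. }
  intros [By|[By|By]].
  - destruct (Hsplit o P1 P2 y branch12 By); auto.
  - destruct (Hsplit o P1 P3 y branch13 By); auto.
  - destruct (Hsplit o P2 P3 y branch23 By); auto.
Qed.

Variables (o12 o13 o23 : U) (pD : U -> T).

Lemma half_side_image xa xb xc om Pa z :
  between d xa om xb -> d xa om = gp xa xb xc ->
  dilation_on d dT pD xa om Pa o -> Rabs (dT Pa o - gp xa xb xc) <= E ->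
  between d xa z xb -> d xa z <= gp xa xb xc ->
  leg_match xa xb xc Pa z (pD z) /\ between dT Pa (pD z) o.
Proof.
  intros Bom Hom Hdil Hlen Bz Hz.
  pose proof (d_nonneg xa z) as Hz0.
  assert (Bz' : between d xa z om).
  { unfold between. rewrite (d_on_segment xa xb z om Bz Bom), Hom, Rabs_left1; lra. }
  destruct (Hdil z Bz') as [Bt Ht]. rewrite Hom in Ht.
  split; [|exact Bt].
  exists (gp xa xb xc - d xa z), (dT (pD z) o).
  pose proof (gromov_product_bounds xa xb xc).
  split; [split; [left; exact Bz|split; lra]|split; [split; [exact Bt|reflexivity]|]].
  unfold between in Bt.
  replace (dT (pD z) o) with (dT Pa o - dT Pa o / gp xa xb xc * d xa z) by lra.
  apply dilation_height_error; lra.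
Qed.

Lemma side_image xa xb xc om Pa Pb z :
  between d xa om xb -> d xa om = gp xa xb xc ->
  dilation_on d dT pD xa om Pa o -> dilation_on d dT pD xb om Pb o ->
  Rabs (dT Pa o - gp xa xb xc) <= E -> Rabs (dT Pb o - gp xb xa xc) <= E ->
  between dT Pa o Pb -> between d xa z xb ->
  (leg_match xa xb xc Pa z (pD z) \/ leg_match xb xa xc Pb z (pD z)) /\
  between dT Pa (pD z) Pb.
Proof.
  intros Bom Hom Dila Dilb Hla Hlb Bo Bz.
  pose proof (between_sym d d_sym) as Bsym.
  pose proof (between_sym dT (dT_sym T dT dT_metric)) as BTsym.
  pose proof (gromov_product_sum xa xb xc) as Hsum.
  destruct (Rle_dec (d xa z) (gp xa xb xc)) as [Hz|Hz].
  - destruct (half_side_image xa xb xc om Pa z Bom Hom Dila Hla Bz Hz) as [M B].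
    split; [left; exact M|]. apply (between_extend T dT dT_metric Pa _ o Pb Bo B).
  - assert (Hom' : d xb om = gp xb xa xc) by (unfold between in Bom; rewrite (d_sym xb om); lra).
    assert (Hz' : d xb z <= gp xb xa xc) by (unfold between in Bz; rewrite (d_sym xb z); lra).
    destruct (half_side_image xb xa xc om Pb z (Bsym _ _ _ Bom) Hom' Dilb Hlb (Bsym _ _ _ Bz) Hz')
      as [M B].
    split; [right; exact M|]. apply BTsym, (between_extend T dT dT_metric Pb _ o Pa); auto.
Qed.

Hypothesis internal12 : between d x1 o12 x2.
Hypothesis internal12_dist : d x1 o12 = gp x1 x2 x3.
Hypothesis internal13 : between d x1 o13 x3.
Hypothesis internal13_dist : d x1 o13 = gp x1 x3 x2.
Hypothesis internal23 : between d x2 o23 x3.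
Hypothesis internal23_dist : d x2 o23 = gp x2 x3 x1.
Hypothesis dilation1_12 : dilation_on d dT pD x1 o12 P1 o.
Hypothesis dilation2_12 : dilation_on d dT pD x2 o12 P2 o.
Hypothesis dilation1_13 : dilation_on d dT pD x1 o13 P1 o.
Hypothesis dilation3_13 : dilation_on d dT pD x3 o13 P3 o.
Hypothesis dilation2_23 : dilation_on d dT pD x2 o23 P2 o.
Hypothesis dilation3_23 : dilation_on d dT pD x3 o23 P3 o.

Lemma triangle_image z : triangle_union d x1 x2 x3 z ->
  triangle_union dT P1 P2 P3 (pD z) /\ corresponds z (pD z).
Proof.
  pose proof gromov_product_sym as Gsym.
  intros [Bz|[Bz|Bz]].
  - destruct (side_image x1 x2 x3 o12 P1 P2 z internal12 internal12_dist dilation1_12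
                dilation2_12 leg1_length leg2_length branch12 Bz) as [[M|M] B];
      split; try (left; exact B); [left|right; left]; exact M.
  - destruct (side_image x1 x3 x2 o13 P1 P3 z internal13 internal13_dist dilation1_13
                dilation3_13 ltac:(rewrite <- Gsym; exact leg1_length) leg3_length
                branch13 Bz) as [[M|M] B];
      split; try (right; left; exact B); [left; apply leg_match_swap, M|right; right; exact M].
  - destruct (side_image x2 x3 x1 o23 P2 P3 z internal23 internal23_dist dilation2_23
                dilation3_23 ltac:(rewrite <- Gsym; exact leg2_length)
                ltac:(rewrite <- Gsym; exact leg3_length) branch23 Bz) as [[M|M] B];
      split; try (right; right; exact B); [right; left|right; right];
      apply leg_match_swap in M; exact M.
Qed.

Theorem tripod_map_quasi_isometry :
  quasi_isometry d (triangle_union d x1 x2 x3) dT (triangle_union dT P1 P2 P3) pD 1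
    (2 * E + 2 * kappa).
Proof.
  apply (correspondence_quasi_isometry _ _ _ _ _ corresponds).
  - exact (inhabits x1).
  - exact d_refl.
  - exact (dT_refl T dT dT_metric).
  - exact triangle_image.
  - exact tripod_preimage.
  - exact corresponds_distortion.
Qed.

End TripodComparison.

End InsizeGeometry.

(* The hyperbolic distance satisfies the hypotheses of the comparison with
   kappa = ln 3 = delta, and the approximation inequalities of the Gromov
   tree make the legs of the tripod 2c delta-approximations of the Gromov
   products; hence p_Delta is a (1, 2 (2c delta) + 2 delta)-quasi-isometry. *)
Theorem mainTheorem6 (n : nat) (c : R) (X : list (Hpt n))
  (T : Type) (dT : T -> T -> R) (V : list T) (p : Hpt n -> T)
  (x1 x2 x3 o12 o13 o23 : Hpt n) (o : T) (pD : Hpt n -> T) :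
  0 < c ->
  NoDup X ->
  INR (length X) <= Rpower 2 c + 2 ->
  gromov_approx_tree c (dH n) X dT V p ->
  In x1 X -> In x2 X -> In x3 X ->
  (* internal points of the geodesic triangle *)
  between (dH n) x1 o12 x2 ->
  dH n x1 o12 = (dH n x1 x2 + dH n x1 x3 - dH n x2 x3) / 2 ->
  between (dH n) x1 o13 x3 ->
  dH n x1 o13 = (dH n x1 x3 + dH n x1 x2 - dH n x3 x2) / 2 ->
  between (dH n) x2 o23 x3 ->
  dH n x2 o23 = (dH n x2 x3 + dH n x2 x1 - dH n x3 x1) / 2 ->
  (* branch point of the tripod *)
  between dT (p x1) o (p x2) ->
  between dT (p x1) o (p x3) ->
  between dT (p x2) o (p x3) ->
  (* the map p_Delta *)
  pD x1 = p x1 -> pD x2 = p x2 -> pD x3 = p x3 ->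
  pD o12 = o -> pD o13 = o -> pD o23 = o ->
  dilation_on (dH n) dT pD x1 o12 (p x1) o ->
  dilation_on (dH n) dT pD x2 o12 (p x2) o ->
  dilation_on (dH n) dT pD x1 o13 (p x1) o ->
  dilation_on (dH n) dT pD x3 o13 (p x3) o ->
  dilation_on (dH n) dT pD x2 o23 (p x2) o ->
  dilation_on (dH n) dT pD x3 o23 (p x3) o ->
  quasi_isometry (dH n)
    (fun z => between (dH n) x1 z x2 \/ between (dH n) x1 z x3 \/ between (dH n) x2 z x3)
    dT
    (fun y => between dT (p x1) y (p x2) \/ between dT (p x1) y (p x3) \/ between dT (p x2) y (p x3))
    pD 1 (4 * c * delta + 2 * delta).
Proof.
  intros _ _ _ [[Hmetric [_ [Hzero _]]] [_ [_ Happrox]]] In1 In2 In3 B12 G12 B13 G13 B23 G23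
    T12 T13 T23 _ _ _ _ _ _ D1_12 D2_12 D1_13 D3_13 D2_23 D3_23.
  pose proof (between_sym dT (dT_sym T dT Hmetric)) as Tsym.
  pose proof (branch_distance_estimate T dT Hmetric (dH n)) as Hleg.
  set (E := 2 * c * delta).
  assert (L1 : Rabs (dT (p x1) o - gromov_product (Hpt n) (dH n) x1 x2 x3) <= E)
    by (apply Hleg with (p x2) (p x3); auto).
  assert (L2 : Rabs (dT (p x2) o - gromov_product (Hpt n) (dH n) x2 x1 x3) <= E)
    by (apply Hleg with (p x1) (p x3); auto).
  assert (L3 : Rabs (dT (p x3) o - gromov_product (Hpt n) (dH n) x3 x1 x2) <= E)
    by (apply Hleg with (p x1) (p x2); auto).
  replace (4 * c * delta + 2 * delta) with (2 * E + 2 * ln 3) by (unfold E, delta; ring).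
  exact (tripod_map_quasi_isometry (Hpt n) (dH n) (ln 3) (dH_sym n) (dH_triangle n)
           (dH_refl n) (dH_on_segment n) (segment_point_exists n) (dH_insize n)
           T dT Hmetric Hzero x1 x2 x3 (p x1) (p x2) (p x3) o E T12 T13 T23 L1 L2 L3
           o12 o13 o23 pD B12 G12 B13 G13 B23 G23 D1_12 D2_12 D1_13 D3_13 D2_23 D3_23).
Qed.
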